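(* Let $\mathcal{D}=(\gamma,s_0,(E_i)_{i\in N})$ be a PPD with $s_0\in E_i$ for every $i\in N$, and let $\omega$ be an $\mathrm{LTL}_f$ formula. Let $\pi$ be a joint $k$-plan for $N$ such that for every agent $i\in N$, $i$ does not anticipate CPR for $\neg\omega$ in $\pi^{\{i\}}$. Then either $H^{\pi',s_0,\gamma}\models\neg\omega$ for every joint $k$-plan $\pi'$ for $N$, or $H^{\pi,s_0,\gamma}\models\omega$.
   Context: Let $N$ be a finite set of agents, $P$ a finite set of propositional atoms, $S=2^P$ the set of states, and $A$ a finite nonempty set of action names containing a distinguished action $\mathit{skip}$. The language $\mathcal{L}_{PL+}$ is generated by $\phi ::= p \mid do(i,a) \mid \neg\phi \mid \phi\wedge\phi$ ($p\in P$, $i\in N$, $a\in A$). A $k$-history is a pair $H=(H_{st},H_{act})$ with $H_{st}:\{0,\dots,k\}\to S$ and $H_{act}:N\times\{0,\dots,k-1\}\to A$; $H,t\models p$ iff $p\in H_{st}(t)$, $H,t\models do(i,a)$ iff $t<k$ and $H_{act}(i,t)=a$, Boolean connectives as usual. An action theory is a pair $\gamma=(\gamma^+,\gamma^-)$ of functions $N\times A\times P\to\mathcal{L}_{PL+}$ with $\gamma^{+}(i,\mathit{skip},p)=\gamma^{-}(i,\mathit{skip},p)=\bot$. A $k$-history $H$ is $\gamma$-compatible if for every $t<k$, $H_{st}(t+1)=(H_{st}(t)\setminus D_t)\cup U_t$, where $D_t$ is the set of $p$ with $H,t\models\gamma^-(i,H_{act}(i,t),p)$ for some $i$ and $H,t\models\neg\gamma^+(j,H_{act}(j,t),p)$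 for all $j$, and $U_t$ is the set of $p$ with $H,t\models\gamma^+(i,H_{act}(i,t),p)$ for some $i$ and $H,t\models\neg\gamma^-(j,H_{act}(j,t),p)$ for all $j$. A joint $k$-plan for a coalition $J\subseteq N$ is a function $\pi$ assigning to each $i\in J$ a sequence $\pi(i):\{0,\dots,k-1\}\to A$ (an individual plan if $J=\{i\}$). For $J'\subseteq J$, $\pi^{J'}$ is the restriction of $\pi$ to $J'$ and $\pi^{-J'}=\pi^{J\setminus J'}$. A joint $k$-plan $\pi_2$ for $N$ is compatible with a $k$-plan $\pi_1$ for $J$ if $\pi_2^J=\pi_1$. For a state $s$, $H^{\pi,s,\gamma}$ is the unique $\gamma$-compatible $k$-history with $H_{st}(0)=s$ and $H_{act}(i,t)=\pi(i)(t)$. $\mathrm{LTL}_f$ formulas: $\phi::=p\mid do(i,a)\mid\neg\phi\mid\phi\wedge\phi\mid X\phi\mid\phi\,U\,\phi$, with $H,t\models X\phi$ iff $t<k$ and $H,t+1\models\phi$, and $H,t\models\phi_1U\phi_2$ iff there is $t'$ with $t\le t'\le k$, $H,t'\models\phi_2$ and $H,t''\models\phi_1$ for all $t\le t''<t'$; $H\models\phi$ means $H,0\models\phi$. A PPD is $\mathcal{D}=(\gamma,s_0,(E_i)_{i\in N})$ with $\gamma$ an action theory, $s_0\in S$ the initial state, and $E_i\subseteq S$ the set of initial states agent $i$ considers possible. Throughout, a horizon $k$ is fixed and ''joint plan'' means joint $k$-plan for $N$. For $i\in N$, a joint plan $\pi_1$, a state $s$ and an $\mathrm{LTL}_f$ formula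 $\omega$: $i$ bears Causal Passive Responsibility (CPR) for $\omega$ in $(\pi_1,s)$ if $H^{\pi_1,s,\gamma}\models\omega$ and there is a joint plan $\pi_2$ compatible with $\pi_1^{-\{i\}}$ with $H^{\pi_2,s,\gamma}\not\models\omega$. For an individual $k$-plan $\pi$ of $i$, $i$ anticipates CPR for $\omega$ in $\pi$ if there exist $s_1\in E_i$ and a joint plan $\pi_1$ compatible with $\pi$ such that $i$ bears CPR for $\omega$ in $(\pi_1,s_1)$. *)

From mathcomp Require Import all_boot.
Set Implicit Arguments. Unset Strict Implicit. Unset Printing Implicit Defensive.

Section PPD.
Variables (N P A : finType) (skip : A).

Definition state := {set P}.

Inductive plform :=
| PAtom of P
| PDo of N & A
| PNot of plform
| PAnd of plform & plform.

Inductive ltlf :=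
| LAtom of P
| LDo of N & A
| LNot of ltlf
| LAnd of ltlf & ltlf
| LNext of ltlf
| LUntil of ltlf & ltlf.

(* A k-history: H_st on {0..k}, H_act on N x {0..k-1}; values outside these
   ranges are never consulted by the semantics. *)
Record history (k : nat) := History {
  hst : nat -> state;
  hact : N -> nat -> A }.

Fixpoint psat k (H : history k) (t : nat) (f : plform) : bool :=
  match f with
  | PAtom p => p \in hst H t
  | PDo i a => (t < k) && (hact H i t == a)
  | PNot g => ~~ psat H t g
  | PAnd g1 g2 => psat H t g1 && psat H t g2
  end.

Fixpoint lsat k (H : history k) (t : nat) (f : ltlf) : Prop :=
  match f with
  | LAtom p => p \in hst H t
  | LDo i a => (t < k) /\ hact H i t = a
  | LNot g => ~ lsat H t g
  | LAnd g1 g2 => lsat H t g1 /\ lsat H t g2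
  | LNext g => t < k /\ lsat H t.+1 g
  | LUntil g1 g2 => exists t', [/\ t <= t', t' <= k, lsat H t' g2 &
                      forall t'', t <= t'' -> t'' < t' -> lsat H t'' g1]
  end.

Definition models k (H : history k) (f : ltlf) : Prop := lsat H 0 f.

(* Action theory; gamma^{+/-}(i, skip, p) = bottom, rendered semantically
   as: never satisfied. *)
Record action_theory := ActionTheory {
  gplus : N -> A -> P -> plform;
  gminus : N -> A -> P -> plform;
  gplus_skip : forall k (H : history k) t i p, ~~ psat H t (gplus i skip p);
  gminus_skip : forall k (H : history k) t i p, ~~ psat H t (gminus i skip p) }.

Definition delset (g : action_theory) k (H : history k) t : state :=
  [set p | [exists i, psat H t (gminus g i (hact H i t) p)] &&
           [forall j, ~~ psat H t (gplus g j (hact H j t) p)]].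

Definition addset (g : action_theory) k (H : history k) t : state :=
  [set p | [exists i, psat H t (gplus g i (hact H i t) p)] &&
           [forall j, ~~ psat H t (gminus g j (hact H j t) p)]].

Definition compatible (g : action_theory) k (H : history k) : Prop :=
  forall t, t < k -> hst H t.+1 = (hst H t :\: delset g H t) :|: addset g H t.

Definition iplan (k : nat) := 'I_k -> A.
Definition jplan (k : nat) := N -> iplan k.

Definition compat_on k (J : {set N}) (pi2 pi1 : jplan k) : Prop :=
  forall j t, j \in J -> pi2 j t = pi1 j t.

Definition plan_act k (pi : jplan k) (i : N) (t : nat) : A :=
  match insub t with Some o => pi i o | None => skip end.

(* Successor state: only the state and actions at time t are consulted. *)
Definition step (g : action_theory) k (pi : jplan k) (s : state) (t : nat) : state :=
  let H := @History k (fun _ => s) (plan_act pi) in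
  (s :\: delset g H t) :|: addset g H t.

Fixpoint plan_states (g : action_theory) k (pi : jplan k) (s : state) (t : nat) : state :=
  match t with
  | 0 => s
  | t'.+1 => step g pi (plan_states g pi s t') t'
  end.

Definition hist_of (g : action_theory) k (pi : jplan k) (s : state) : history k :=
  @History k (plan_states g pi s) (plan_act pi).

Record PPD := MkPPD {
  ppd_gamma : action_theory;
  ppd_s0 : state;
  ppd_E : N -> {set state} }.

Definition CPR (g : action_theory) k (i : N) (pi1 : jplan k) (s : state) (w : ltlf) : Prop :=
  models (hist_of g pi1 s) w /\
  exists pi2 : jplan k, compat_on (~: [set i]) pi2 pi1 /\
                        ~ models (hist_of g pi2 s) w.

Definition anticipates_CPR (D : PPD) k (i : N) (p : iplan k) (w : ltlf) : Prop :=
  exists s1, s1 \in ppd_E D i /\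
  exists pi1 : jplan k, (forall t, pi1 i t = p t) /\ CPR (ppd_gamma D) i pi1 s1 w.

End PPD.

From mathcomp Require Import all_boot.
From Stdlib Require Import Classical FunctionalExtensionality.

(* Suppose the joint plan pi violates w from s0 while some joint
   plan pi' satisfies w from s0.  Walk from pi to pi' by switching agents one at
   a time from their pi-plan to their pi'-plan (a "hybrid" argument): the first
   plan of this walk that satisfies w is reached from a plan violating w by a
   unilateral change of a single agent a, who still follows pi a before the
   switch.  That pre-switch plan, in the initial state s0 which a considers
   possible, is a situation in which a bears CPR for (not w) while playing
   pi a, i.e. a anticipates CPR for (not w) in pi a -- contradicting the
   hypothesis. *)

Section SingleDeviation.
Variables (N A : finType) (k : nat).

Definition mix (S : seq N) (pi pi' : jplan N A k) : jplan N A k :=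
  fun j => if j \in S then pi' j else pi j.

Lemma mix_nil (pi pi' : jplan N A k) : mix [::] pi pi' = pi.
Proof. exact: functional_extensionality. Qed.

Lemma mix_all (pi pi' : jplan N A k) : mix (enum N) pi pi' = pi'.
Proof. by apply: functional_extensionality => j; rewrite /mix mem_enum. Qed.

Lemma mix_cons_mem (a : N) (S : seq N) (pi pi' : jplan N A k) :
  a \in S -> mix (a :: S) pi pi' = mix S pi pi'.
Proof.
move=> aS; apply: functional_extensionality => j; rewrite /mix in_cons.
by case: (eqVneq j a) => [->|] /=; rewrite ?aS.
Qed.

Lemma mix_cons_compat (a : N) (S : seq N) (pi pi' : jplan N A k) :
  compat_on (~: [set a]) (mix (a :: S) pi pi') (mix S pi pi').
Proof.
by move=> j t; rewrite in_setC in_set1 => /negbTE ja; rewrite /mix in_cons ja.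
Qed.

Lemma single_deviation (Q : jplan N A k -> Prop) (pi pi' : jplan N A k) :
  Q pi -> ~ Q pi' ->
  exists a sigma sigma',
    [/\ forall t, sigma a t = pi a t, Q sigma,
        compat_on (~: [set a]) sigma' sigma & ~ Q sigma'].
Proof.
move=> Qpi nQpi'; apply: NNPP => no_dev; apply: nQpi'.
have Qmix : forall S, Q (mix S pi pi').
  elim=> [|a S IH]; first by rewrite mix_nil.
  have [aS|aNS] := boolP (a \in S); first by rewrite mix_cons_mem.
  apply: NNPP => nQ; apply: no_dev.
  exists a, (mix S pi pi'), (mix (a :: S) pi pi'); split=> //.
  - by move=> t; rewrite /mix (negbTE aNS).
  - exact: mix_cons_compat.
by rewrite -(mix_all pi pi').
Qed.

End SingleDeviation.

Theorem theorem5 (N P A : finType) (skip : A) (D : @PPD N P A skip) (k : nat)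
  (w : ltlf N P A) (pi : jplan N A k) :
  (forall i, ppd_s0 D \in ppd_E D i) ->
  (forall i, ~ anticipates_CPR D i (pi i) (LNot w)) ->
  (forall pi' : jplan N A k,
      models (hist_of (ppd_gamma D) pi' (ppd_s0 D)) (LNot w))
  \/ models (hist_of (ppd_gamma D) pi (ppd_s0 D)) w.
Proof.
move=> s0_possible no_anticipation.
pose Q (pl : jplan N A k) := models (hist_of (ppd_gamma D) pl (ppd_s0 D)) (LNot w).
have [pi_w|pi_not_w] := classic (models (hist_of (ppd_gamma D) pi (ppd_s0 D)) w).
  by right.
left=> pi' pi'_w.
have nQpi' : ~ Q pi' by apply.
have [a [sigma [sigma' [follows Qsigma compat nQsigma']]]] :=
  @single_deviation N A k Q pi pi' pi_not_w nQpi'.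
apply: (no_anticipation a); exists (ppd_s0 D); split; first exact: s0_possible.
by exists sigma; split=> //; split=> //; exists sigma'.
Qed.
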